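(* For the game ${\rm ab}$: - $\lim_{n\to\infty}P^{\rm ab}_n(p)=0$ if $p<1/64$; - $\lim_{n\to\infty}P^{\rm ab}_n(p)=1$ if $p>15/16$.
   Context: Fix $n\geq1$. Alice and Bob alternately make moves, Alice first, each making $n$ moves; every move is a choice from $\{1,2\}$. The outcome of the game ${\rm ab}_n(p)$ is the pair $(\#\{k:a_k=1\},\#\{k:b_k=1\})$, where $a_1,\dots,a_n$ are Alice's moves and $b_1,\dots,b_n$ are Bob's moves. To each possible outcome a winner is assigned independently: Bob with probability $p$, Alice with probability $1-p$. The players know the assignment and all previous moves. $P^{\rm ab}_n(p)$ is the probability that Bob has a winning strategy, i.e. a rule choosing his moves as a function of previous moves that guarantees a win for him whatever Alice plays. *)

From HB Require Import structures.
From mathcomp Require Import all_boot all_order all_algebra.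
From mathcomp Require Import all_classical all_reals all_analysis.
Set Implicit Arguments. Unset Strict Implicit. Unset Printing Implicit Defensive.
Import Order.TTheory GRing.Theory Num.Theory.
Local Open Scope ring_scope.

(* A move is a choice from {1,2}; we encode the move 1 as [true] and 2 as [false].
   A history is the sequence of all moves made so far, in order
   a_1, b_1, a_2, b_2, ... *)

Definition bob_strategy := seq bool -> bool.

Fixpoint bob_moves (s : bob_strategy) (hist : seq bool) (as_ : seq bool) : seq bool :=
  match as_ with
  | [::] => [::]
  | x :: as' =>
      let h := rcons hist x in
      let y := s h in
      y :: bob_moves s (rcons h y) as'
  end.

Definition ab_outcome (n : nat) (as_ bs : seq bool) : 'I_n.+1 * 'I_n.+1 :=
  (inord (count id as_), inord (count id bs)).

Definition bob_has_winning_strategy (n : nat) (W : {set 'I_n.+1 * 'I_n.+1}) : Prop :=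
  exists s : bob_strategy,
    forall a : n.-tuple bool, ab_outcome n a (bob_moves s [::] a) \in W.

(* P^ab_n(p): each outcome is independently assigned to Bob with probability p,
   so the assignment W has probability p^|W| (1-p)^(#outcomes - |W|). *)
Definition P_ab {R : realType} (n : nat) (p : R) : R :=
  \sum_(W : {set 'I_n.+1 * 'I_n.+1})
     (if pselect (bob_has_winning_strategy W)
      then p ^+ #|W| * (1 - p) ^+ #|~: W| else 0).

(* Backward induction turns "Bob has a winning strategy for the set W of
   outcomes" into a recursion on positions (rounds left, Alice's count, Bob's
   count).  A won position can be split: whatever the opponent plays during
   the next s rounds, the winner keeps a won position while raising his own
   count by at most s.  Splitting r rounds at t = (r - 1) / 2, once with the
   opponent playing no 1 and once with him playing t + 1 ones first, shows that
   W must contain a disjoint union of two such certificates for blocks of t + 1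
   columns, each starting in one of at most r - t + 1 rows.  By the union
   bound, the normalised probability B(r) = 4 (r + 3)^2 * sum_C p^|C| that W
   contains some certificate satisfies B(r) <= B(t)^2, while for 2 <= r <= 6
   (where the certificates are graphs of maps from columns to rows)
   B(r) <= 0.995 as soon as p <= 1/16.  So P^ab_n(p) -> 0 for p <= 1/16; the
   same argument for Alice, with the counts exchanged and 1 - p in place of p,
   gives P^ab_n(p) -> 1 for p >= 15/16. *)

From HB Require Import structures.
From mathcomp Require Import all_boot all_order all_algebra.
From mathcomp Require Import all_classical all_reals all_analysis.
From mathcomp Require Import ring lra zify.
Import Order.TTheory GRing.Theory Num.Theory numFieldNormedType.Exports.

Set Implicit Arguments.
Unset Strict Implicit.
Unset Printing Implicit Defensive.

Fixpoint bob_wins_from {n : nat} (W : {set 'I_n.+1 * 'I_n.+1}) (r i j : nat) : bool :=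
  if r is r'.+1 then
    (bob_wins_from W r' i j || bob_wins_from W r' i j.+1) &&
    (bob_wins_from W r' i.+1 j || bob_wins_from W r' i.+1 j.+1)
  else (inord i, inord j) \in W.

(* Numbers of ones at even and at odd positions of [h], i.e. the counts of
   Alice and Bob in a history a_1 b_1 a_2 b_2 ... *)
Fixpoint history_counts (h : seq bool) : nat * nat :=
  if h is x :: t then (x + (history_counts t).2, (history_counts t).1)%N else (0, 0)%N.

Lemma history_counts_rcons h x : history_counts (rcons h x) =
  if odd (size h) then ((history_counts h).1, (history_counts h).2 + x)%N
  else ((history_counts h).1 + x, (history_counts h).2)%N.
Proof.
elim: h => [|y t IH] /=; first by rewrite addn0.
by rewrite IH; case: (odd (size t)) => /=; rewrite ?addnA.
Qed.

Section BackwardInduction.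
Variables (n : nat) (W : {set 'I_n.+1 * 'I_n.+1}).

Lemma bob_wins_from_step r i j : bob_wins_from W r.+1 i j ->
  forall a : bool, exists b : bool, bob_wins_from W r (i + a) (j + b).
Proof.
case/andP=> H0 H1 [] /=; [case/orP: H1 | case/orP: H0] => H;
  by [exists false; rewrite ?addn0 ?addn1 | exists true; rewrite ?addn0 ?addn1].
Qed.

Lemma alice_wins_from_step r i j : ~~ bob_wins_from W r.+1 i j ->
  exists a : bool, forall b : bool, ~~ bob_wins_from W r (i + a) (j + b).
Proof.
rewrite /= negb_and !negb_or => /orP[] /andP[H0 H1].
  by exists false => -[]; rewrite ?addn0 ?addn1.
by exists true => -[]; rewrite ?addn0 ?addn1.
Qed.

Lemma bob_wins_from_strategy s r h i j :
  (forall a : seq bool, size a = r ->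
     (inord (i + count id a), inord (j + count id (bob_moves s h a))) \in W) ->
  bob_wins_from W r i j.
Proof.
elim: r h i j => [|r IH] h i j Hs /=.
  by have := Hs [::] erefl; rewrite /= !addn0.
have reply (x : bool) : bob_wins_from W r (i + x) (j + s (rcons h x)).
  apply: (IH (rcons (rcons h x) (s (rcons h x)))) => a Ha.
  by have := Hs (x :: a); rewrite /= Ha !addnA; apply.
have [H0 H1] := (reply false, reply true); rewrite addn0 addn1 in H0 H1.
by move: H0 H1; case: (s _); case: (s _); rewrite ?addn0 ?addn1 => -> ->; rewrite ?orbT.
Qed.

(* At a history of length 2k+1, Bob answers 1 exactly when answering 0 does
   not keep a won position with the n - k.+1 remaining rounds. *)
Definition backward_strategy : bob_strategy := fun h =>
  ~~ bob_wins_from W (n - (size h)./2.+1) (history_counts h).1 (history_counts h).2.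

Lemma backward_strategy_wins a h k i j :
  size h = k.*2 -> history_counts h = (i, j) -> (k + size a = n)%N ->
  bob_wins_from W (size a) i j ->
  (inord (i + count id a), inord (j + count id (bob_moves backward_strategy h a))) \in W.
Proof.
elim: a h k i j => [|x a IH] h k i j Hs Hc Hk /=; first by rewrite !addn0.
case/andP=> H0 H1; set h' := rcons h x.
have Hs' : size h' = k.*2.+1 by rewrite size_rcons Hs.
have Hc' : history_counts h' = (i + x, j)%N.
  by rewrite history_counts_rcons Hs odd_double Hc.
have Hr : (n - (size h')./2.+1 = size a)%N.
  by move: Hk; rewrite Hs' -[k.*2.+1]/(true + k.*2)%N half_bit_double /=; lia.
set y := backward_strategy h'.
have Hy : bob_wins_from W (size a) (i + x) (j + y).
  rewrite /y /backward_strategy Hr Hc' /=.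
  have : bob_wins_from W (size a) (i + x) j || bob_wins_from W (size a) (i + x) j.+1.
    by case: (x) H0 H1; rewrite ?addn0 ?addn1.
  by case: (boolP (bob_wins_from _ _ _ j)) => /= H; rewrite ?addn0 ?addn1.
have := IH (rcons h' y) k.+1 (i + x) (j + y).
rewrite size_rcons Hs' doubleS history_counts_rcons Hs' /= odd_double Hc' addSnnS.
by move=> /(_ erefl erefl Hk Hy); rewrite !addnA.
Qed.

Lemma bob_has_winning_strategyP :
  bob_has_winning_strategy W <-> bob_wins_from W n 0 0.
Proof.
split=> [[s Hs] | H].
  apply: (@bob_wins_from_strategy s n [::]) => a Ha.
  by have := Hs (Tuple (introT eqP Ha)); rewrite /ab_outcome !add0n.
exists backward_strategy => a.
have := @backward_strategy_wins a [::] 0 0 0 erefl erefl.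
by rewrite size_tuple add0n !add0n => /(_ erefl H).
Qed.

End BackwardInduction.

(* A won-position predicate [g r c j] of a player, with [r] rounds to go, [c]
   ones played by the opponent and [j] by the player himself. *)
Definition one_step_closed (g : nat -> nat -> nat -> bool) : Prop :=
  forall r c j, g r.+1 c j -> forall a : bool, exists b : bool, g r (c + a) (j + b).

Definition splittable (g : nat -> nat -> nat -> bool) : Prop :=
  forall r c j, g r c j -> forall s a, s <= r -> a <= s ->
    exists2 y, j <= y <= j + s & g (r - s) (c + a) y.

Lemma one_step_closed_splittable g : one_step_closed g -> splittable g.
Proof.
move=> Hg r c j H s; elim: s r c j H => [|s IH] r c j H a hs.
  by rewrite leqn0 => /eqP->; exists j; rewrite ?subn0 ?addn0 ?leqnn.
case: r H hs => [|r] // H hs ha.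
have [b Hb] := Hg r c j H (0 < a).
have a_split : (a - (0 < a) <= s) && (c + (0 < a) + (a - (0 < a)) == c + a).
  by case: (posnP a) ha => [-> | a0] /=; lia.
case/andP: a_split => ha' /eqP ca.
have [y hy Hy] := IH r _ _ Hb (a - (0 < a)) hs ha'.
by exists y; [case: (b) hy; lia | rewrite subSS -ca].
Qed.

Lemma bob_wins_from_one_step n (W : {set 'I_n.+1 * 'I_n.+1}) :
  one_step_closed (bob_wins_from W).
Proof. exact: bob_wins_from_step. Qed.

Lemma alice_wins_from_one_step n (W : {set 'I_n.+1 * 'I_n.+1}) :
  one_step_closed (fun r c j => ~~ bob_wins_from W r j c).
Proof. by move=> r c j /alice_wins_from_step[b Hb] a; exists b. Qed.

Section RandomSets.
Variables (R : realType) (T : finType).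
Local Open Scope ring_scope.
Implicit Types (q : R) (W C : {set T}) (F : seq {set T}).

Definition set_mass q W : R := q ^+ #|W| * (1 - q) ^+ #|~: W|.

Definition weight q F : R := \sum_(C <- F) q ^+ #|C|.

Lemma set_mass_ge0 q W : 0 <= q <= 1 -> 0 <= set_mass q W.
Proof. by case/andP=> q0 q1; rewrite mulr_ge0 // exprn_ge0 // subr_ge0. Qed.

Lemma weight_ge0 q F : 0 <= q -> 0 <= weight q F.
Proof. by move=> q0; apply: sumr_ge0 => C _; rewrite exprn_ge0. Qed.

Lemma set_massC q W : set_mass q (~: W) = set_mass (1 - q) W.
Proof. by rewrite /set_mass finset.setCK subKr mulrC. Qed.

Lemma sum_set_mass_superset q C :
  \sum_(W : {set T} | C \subset W) set_mass q W = q ^+ #|C|.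
Proof.
have prod_mass (W : {set T}) : \prod_i (if i \in W then q else 1 - q) = set_mass q W.
  rewrite /set_mass (bigID (mem W)) /=; congr (_ * _); rewrite -prodr_const.
    by apply: eq_big => // i ->.
  by apply: eq_big => [i | i /negbTE ->]; rewrite ?inE.
have := @bigA_distr R 0 1 *%R +%R T (fun _ => q) (fun i => if i \in C then 0 else 1 - q).
have -> : \prod_i (q + (if i \in C then 0 else 1 - q)) = q ^+ #|C|.
  rewrite -prodr_const (bigID (mem C)) /= [X in _ * X]big1 ?mulr1.
    by apply: eq_bigr => i ->; rewrite addr0.
  by move=> i /negbTE ->; rewrite addrC subrK.
move=> ->; rewrite big_mkcond; apply: eq_bigr => W _.
case: ifPn => [/fintype.subsetP CW | /fintype.subsetPn[i iC iW]].
  rewrite -prod_mass; apply: eq_bigr => i _.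
  by case: ifPn => // iW; case: ifP => // /CW; rewrite (negbTE iW).
by rewrite (bigD1 i) //= (negbTE iW) iC mul0r.
Qed.

Lemma sum_set_mass q : \sum_(W : {set T}) set_mass q W = 1.
Proof.
rewrite -(expr0 q) -(cards0 T) -sum_set_mass_superset.
by apply: eq_bigl => W; rewrite finset.sub0set.
Qed.

Lemma sum_set_mass_le_weight q (E : pred {set T}) F : 0 <= q <= 1 ->
  (forall W, E W -> exists2 C, C \in F & C \subset W) ->
  \sum_(W | E W) set_mass q W <= weight q F.
Proof.
move=> q01 EF; rewrite /weight.
under [X in _ <= X]eq_bigr do rewrite -sum_set_mass_superset big_mkcond.
rewrite exchange_big big_mkcond /=; apply: ler_sum => W _.
have mass0 : forall C, 0 <= (if C \subset W then set_mass q W else 0).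
  by move=> C; case: ifP => // _; exact: set_mass_ge0.
case: ifP => [/EF[C CF CW] | _]; last exact: sumr_ge0.
by rewrite (big_rem C) //= CW lerDl sumr_ge0.
Qed.

End RandomSets.

Section Numerics.
Variable R : realType.
Local Open Scope ring_scope.

(* At r = 6 the left side is 0.9940..., which dictates the constant 995/1000. *)
Lemma graph_weight_small (q : R) r : 0 <= q <= 1 / 16 -> (2 <= r <= 6)%N ->
  (4 * (r + 3) ^ 2)%:R * ((r.+1 ^ r.+1)%:R * q ^+ r.+1) <= 995 / 1000.
Proof.
case/andP=> q0 q1 r26.
have qr : q ^+ r.+1 <= (1 / 16) ^+ r.+1 by rewrite lerXn2r ?nnegrE //; lra.
apply: le_trans (_ : (4 * (r + 3) ^ 2)%:R * ((r.+1 ^ r.+1)%:R * (1 / 16) ^+ r.+1) <= _).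
  by rewrite ler_wpM2l // ler_wpM2l.
rewrite !natrM !natrX natrD.
by case: r r26 {qr} => [|[|[|[|[|[|[|r]]]]]]] //= _; rewrite !exprS !expr0; lra.
Qed.

Lemma join_scale_le r t : t = ((r - 1) %/ 2)%N -> (7 <= r)%N ->
  (4 * (r + 3) ^ 2 * (r - t).+1 ^ 2 <= (4 * (t + 3) ^ 2) ^ 2)%N.
Proof.
move=> ht r7; have h : ((r + 3) * (r - t).+1 <= 2 * (t + 3) ^ 2)%N by nia.
by have := leq_mul h h; rewrite -!mulnn; nia.
Qed.

Lemma join_weight_le (Kr Kt s w1 w2 th : R) :
  0 <= Kr -> 0 < Kt -> 0 <= w1 -> 0 <= w2 -> Kr * s ^+ 2 <= Kt ^+ 2 ->
  Kt * w1 <= s * th -> Kt * w2 <= s * th -> Kr * (w1 * w2) <= th ^+ 2.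
Proof.
move=> Kr0 Kt0 w10 w20 hK h1 h2.
have prod : Kt ^+ 2 * (w1 * w2) <= s ^+ 2 * th ^+ 2.
  have := ler_pM (mulr_ge0 (ltW Kt0) w10) (mulr_ge0 (ltW Kt0) w20) h1 h2.
  by rewrite -mulrACA -expr2 -exprMn mulrACA -!expr2.
rewrite -(ler_pM2l (exprn_gt0 2 Kt0)); nra.
Qed.

Lemma exprn_half_sq (x : R) m : 0 <= x <= 1 -> (x ^+ (2 ^ m.-1)) ^+ 2 <= x ^+ (2 ^ m).
Proof.
case/andP=> x0 x1; rewrite -exprM; case: m => [|m]; last by rewrite expnSr.
by rewrite expn0 mul1n expr1 expr2 ler_piMl.
Qed.

End Numerics.

Section Certificates.
Variables (R : realType) (T : finType) (n : nat).
Variables (cell : nat -> nat -> T) (col : T -> nat).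
Hypothesis col_cell : forall x y, x <= n -> col (cell x y) = x.

Definition in_columns (F : seq {set T}) (lo hi : nat) : Prop :=
  forall C, C \in F -> forall z, z \in C -> lo <= col z <= hi.

Definition certificate (r c j : nat) (F : seq {set T}) : Prop :=
  in_columns F c (c + r) /\
  forall g (Z : {set T}), splittable g ->
    (forall c' j', g 0 c' j' -> cell c' j' \in Z) -> g r c j ->
    exists2 C, C \in F & C \subset Z.

Definition graph_family (r c j : nat) : seq {set T} :=
  [seq [set cell (c + k) (j + f k) | k : 'I_r.+1]
  | f : {ffun 'I_r.+1 -> 'I_r.+1} <- enum {ffun 'I_r.+1 -> 'I_r.+1}].

Definition range_family (F : nat -> seq {set T}) (j s : nat) : seq {set T} :=
  flatten [seq F y | y <- index_iota j (j + s).+1].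

Definition join_family (F1 F2 : seq {set T}) : seq {set T} :=
  [seq C1 :|: C2 | C1 <- F1, C2 <- F2].

Lemma graph_family_certificate r c j : c + r <= n ->
  certificate r c j (graph_family r c j).
Proof.
move=> crn; split=> [C /mapP[f _ ->] z /imsetP[k _ ->] | g Z Hg HZ grcj].
  by rewrite col_cell; have := ltn_ord k; lia.
have row (k : 'I_r.+1) : exists y : 'I_r.+1, cell (c + k) (j + y) \in Z.
  have [y /andP[jy yj] gy] := Hg _ _ _ grcj r k (leqnn r) (ltn_ord k).
  have yr : y - j < r.+1 by lia.
  by exists (Ordinal yr); rewrite /= subnKC //; apply: HZ; rewrite subnn in gy.
pose f := [ffun k : 'I_r.+1 => odflt ord0 [pick y : 'I_r.+1 | cell (c + k) (j + y) \in Z]].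
exists [set cell (c + k) (j + f k) | k : 'I_r.+1]; first by rewrite map_f ?mem_enum.
apply/fintype.subsetP => z /imsetP[k _ ->]; rewrite ffunE.
by case: pickP => [// | none]; have [y] := row k; rewrite none.
Qed.

Lemma weight_graph_family (q : R) r c j : c + r <= n ->
  weight q (graph_family r c j) = ((r.+1 ^ r.+1)%:R * q ^+ r.+1)%R.
Proof.
move=> crn; rewrite /weight big_map big_enum /=.
rewrite (eq_bigr (fun _ => q ^+ r.+1)%R) ?sumr_const ?card_ffun ?card_ord ?mulr_natl //.
move=> f _; rewrite card_imset ?card_ord // => k1 k2 /(congr1 col).
rewrite !col_cell; try by [have := ltn_ord k1; lia | have := ltn_ord k2; lia].
by move/addnI/ord_inj.
Qed.

Lemma in_columns_range_family F j s lo hi : (forall y, in_columns (F y) lo hi) ->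
  in_columns (range_family F j s) lo hi.
Proof. by move=> HF C /flatten_mapP[y _]; apply: HF. Qed.

Lemma weight_range_family_le (q k b : R) F j s :
  (forall y, k * weight q (F y) <= b)%R ->
  (k * weight q (range_family F j s) <= s.+1%:R * b)%R.
Proof.
move=> HF; rewrite /weight big_flatten big_map /= mulr_sumr.
apply: le_trans (_ : \sum_(y <- index_iota j (j + s).+1) b <= _)%R.
  by apply: ler_sum => y _; apply: HF.
by rewrite sumr_const_nat -addnS addKn mulr_natl.
Qed.

Lemma weight_join_family (q : R) F1 F2 lo1 hi1 lo2 hi2 :
  in_columns F1 lo1 hi1 -> in_columns F2 lo2 hi2 -> hi1 < lo2 ->
  weight q (join_family F1 F2) = (weight q F1 * weight q F2)%R.
Proof.
move=> cols1 cols2 hlo; rewrite /weight big_allpairs_dep big_distrl /=.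
apply: eq_big_seq => C1 C1F; rewrite big_distrr /=; apply: eq_big_seq => C2 C2F.
rewrite -exprD cardsU; suff -> : C1 :&: C2 = finset.set0 by rewrite cards0 subn0.
apply/finset.setP => z; rewrite !inE; apply/negP => /andP[z1 z2].
by have := cols1 _ C1F z z1; have := cols2 _ C2F z z2; lia.
Qed.

(* The opponent first plays 0 ones, resp. t+1 ones, during r - t rounds; the
   player then holds a won position with t rounds to go in the left, resp.
   right, block of t+1 columns. *)
Lemma certificate_join r t c j F1 F2 : t + t.+1 <= r ->
  (forall y, certificate t c y (F1 y)) ->
  (forall y, certificate t (c + t.+1) y (F2 y)) ->
  certificate r c j
    (join_family (range_family F1 j (r - t)) (range_family F2 j (r - t))).
Proof.
move=> tr HF1 HF2; split.
  move=> _ /allpairsP[[C1 C2] [/= /flatten_mapP[y1 _ C1F] /flatten_mapP[y2 _ C2F] ->]].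
  move=> z; rewrite finset.in_setU => /orP[z1 | z2].
    by have := (HF1 y1).1 _ C1F z z1; lia.
  by have := (HF2 y2).1 _ C2F z z2; lia.
move=> g Z Hg HZ grcj.
have hit a F : (forall y, certificate t (c + a) y (F y)) -> a <= r - t ->
    exists2 C, C \in range_family F j (r - t) & C \subset Z.
  move=> HF ha; have [y /andP[jy yj] gy] := Hg _ _ _ grcj (r - t) a (leq_subr t r) ha.
  rewrite subKn in gy; last by lia.
  have [C CF CZ] := (HF y).2 g Z Hg HZ gy.
  by exists C => //; apply/flatten_mapP; exists y; rewrite ?mem_index_iota; first lia.
have [C1 C1F C1Z] : exists2 C, C \in range_family F1 j (r - t) & C \subset Z.
  by apply: (hit 0) => // y; rewrite addn0.
have [C2 C2F C2Z] := hit t.+1 F2 HF2 ltac:(lia).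
exists (C1 :|: C2); first exact: allpairs_f.
by rewrite finset.subUset C1Z C2Z.
Qed.

(* The factor 4 (r + 3)^2 is what lets the bound survive the squaring in
   [certificate_join], by [join_scale_le]. *)
Definition weight_bounded (q : R) (r : nat) (F : seq {set T}) : Prop :=
  forall m, (m == 0) || (7 * 2 ^ m <= r.+1) ->
    ((4 * (r + 3) ^ 2)%:R * weight q F <= (995 / 1000) ^+ (2 ^ m))%R.

Lemma exists_certificate (q : R) : (0 <= q <= 1 / 16)%R ->
  forall r c j, 2 <= r -> c + r <= n ->
  exists F, certificate r c j F /\ weight_bounded q r F.
Proof.
move=> q01; elim/ltn_ind=> r IH c j r2 crn.
have [r6 | r7] := leqP r 6.
  exists (graph_family r c j); split; first exact: graph_family_certificate.
  case=> [|m] hm; last by move: hm; rewrite /= expnS; have := expn_gt0 2 m; lia.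
  by rewrite weight_graph_family // expn0 expr1 graph_weight_small // r2.
set t := (r - 1) %/ 2.
have [t_lt t2] : t < r /\ 2 <= t by rewrite /t; split; lia.
have half c' : c' + t <= n -> exists F : nat -> seq {set T},
    forall y, certificate t c' y (F y) /\ weight_bounded q t (F y).
  by move=> ctn; have [F HF] := choice (fun y => IH t t_lt c' y t2 ctn); exists F.
have [F1 HF1] := half c ltac:(rewrite /t; lia).
have [F2 HF2] := half (c + t.+1) ltac:(rewrite /t; lia).
set L1 := range_family F1 j (r - t); set L2 := range_family F2 j (r - t).
have cols1 : in_columns L1 c (c + t).
  by apply: in_columns_range_family => y; case: (HF1 y) => -[].
have cols2 : in_columns L2 (c + t.+1) (c + t.+1 + t).
  by apply: in_columns_range_family => y; case: (HF2 y) => -[].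
exists (join_family L1 L2); split.
  apply: certificate_join => [| y | y]; first by rewrite /t; lia.
    by case: (HF1 y).
  by case: (HF2 y).
move=> m hm; have hm' : (m.-1 == 0) || (7 * 2 ^ m.-1 <= t.+1).
  by case: m hm => //= m; rewrite expnS /t; lia.
have bound F : (forall y, weight_bounded q t (F y)) ->
    ((4 * (t + 3) ^ 2)%:R * weight q (range_family F j (r - t))
     <= (r - t).+1%:R * (995 / 1000) ^+ (2 ^ m.-1))%R.
  by move=> HF; apply: weight_range_family_le => y; apply: HF.
have q0 : (0 <= q)%R by case/andP: q01.
rewrite (weight_join_family _ cols1 cols2); last by lia.
have theta01 : (0 <= (995 / 1000 : R) <= 1)%R by apply/andP; split; lra.
apply: le_trans _ (exprn_half_sq m theta01).
apply: join_weight_le (weight_ge0 _ q0) (weight_ge0 _ q0) _ (bound F1 _) (bound F2 _) => //.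
- by rewrite -!natrX -natrM ler_nat join_scale_le.
- by move=> y; case: (HF1 y).
- by move=> y; case: (HF2 y).
Qed.

Lemma sum_set_mass_won_le (q : R) (E : pred {set T}) k :
  (0 <= q <= 1 / 16)%R -> 7 * 2 ^ k <= n ->
  (forall Z, E Z -> exists g, [/\ splittable g,
     forall c j, g 0 c j -> cell c j \in Z & g n 0 0]) ->
  (\sum_(Z | E Z) set_mass q Z <= (995 / 1000) ^+ k)%R.
Proof.
move=> q01 kn EZ; have [|F [[_ FZ] Fw]] := @exists_certificate q q01 n 0 0 _ (leqnn n).
  by have := expn_gt0 2 k; lia.
have q1 : (0 <= q <= 1)%R by case/andP: q01 => q0 q1; rewrite q0 /=; lra.
apply: le_trans (sum_set_mass_le_weight (F := F) q1 _) _.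
  by move=> Z /EZ[g [Hg HZ gn]]; exact: FZ Hg HZ gn.
apply: le_trans (_ : (995 / 1000) ^+ (2 ^ k) <= _)%R; last first.
  by apply: ler_wiXn2l; [lra | lra | exact/ltnW/ltn_expl].
apply: le_trans (Fw k ltac:(apply/orP; right; lia)).
apply: ler_peMl; first by apply: weight_ge0; case/andP: q1.
by rewrite ler1n muln_gt0 expn_gt0 addn_gt0 orbT.
Qed.

End Certificates.

Local Open Scope classical_set_scope.
Local Open Scope ring_scope.

Section Limits.
Variable R : realType.
Implicit Types (p : R) (n k : nat).

Lemma P_ab_sum_won n p :
  P_ab n p = \sum_(W : {set 'I_n.+1 * 'I_n.+1} | bob_wins_from W n 0 0) set_mass p W.
Proof.
rewrite /P_ab [RHS]big_mkcond; apply: eq_bigr => W _.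
case: pselect => [/bob_has_winning_strategyP -> // | lose].
by case: ifP => // /bob_has_winning_strategyP.
Qed.

Lemma one_sub_P_ab n p :
  1 - P_ab n p =
  \sum_(W : {set 'I_n.+1 * 'I_n.+1} | ~~ bob_wins_from W n 0 0) set_mass p W.
Proof.
rewrite P_ab_sum_won -(sum_set_mass ('I_n.+1 * 'I_n.+1)%type p).
by rewrite (bigID (fun W => bob_wins_from W n 0 0)) /= addrC addrK.
Qed.

Lemma P_ab_ge0 n p : 0 <= p -> p <= 1 -> 0 <= P_ab n p.
Proof.
by move=> p0 p1; rewrite P_ab_sum_won sumr_ge0 // => W _; rewrite set_mass_ge0 ?p0.
Qed.

Lemma P_ab_le1 n p : 0 <= p -> p <= 1 -> P_ab n p <= 1.
Proof.
by move=> p0 p1; rewrite -subr_ge0 one_sub_P_ab sumr_ge0 // => W _; rewrite set_mass_ge0 ?p0.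
Qed.

Lemma P_ab_le n p k : 0 <= p -> p <= 1 / 16 -> (7 * 2 ^ k <= n)%N ->
  P_ab n p <= (995 / 1000) ^+ k.
Proof.
move=> p0 p1 kn; rewrite P_ab_sum_won.
pose cell x y : 'I_n.+1 * 'I_n.+1 := (inord x, inord y).
apply: (@sum_set_mass_won_le _ _ n cell (fun z => z.1) _ _ _ _ _ kn) => [x y xn | | W win].
- by rewrite /= inordK.
- by rewrite p0 p1.
- exists (bob_wins_from W); split=> //.
  exact/one_step_closed_splittable/bob_wins_from_one_step.
Qed.

Lemma one_sub_P_ab_le n p k : 15 / 16 <= p -> p <= 1 -> (7 * 2 ^ k <= n)%N ->
  1 - P_ab n p <= (995 / 1000) ^+ k.
Proof.
move=> p0 p1 kn; rewrite one_sub_P_ab (reindex_inj (@finset.setC_inj _)) /=.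
under eq_bigr do rewrite set_massC.
pose cell x y : 'I_n.+1 * 'I_n.+1 := (inord y, inord x).
apply: (@sum_set_mass_won_le _ _ n cell (fun z => z.2) _ _ _ _ _ kn) => [x y xn | | Z win].
- by rewrite /= inordK.
- by apply/andP; split; lra.
- exists (fun r c j => ~~ bob_wins_from (~: Z) r j c); split=> //.
    exact/one_step_closed_splittable/alice_wins_from_one_step.
  by move=> c j /=; rewrite finset.in_setC negbK.
Qed.

Lemma cvg_of_expr_bound (u : nat -> R) (l th : R) : 0 <= th -> th < 1 ->
  (forall k, exists N, forall n, (N <= n)%N -> `|l - u n| <= th ^+ k) ->
  u n @[n --> \oo] --> l.
Proof.
move=> th0 th1 ub; apply/cvgrPdist_lt => e e0.
have /cvgr0Pnorm_lt/(_ e e0)[K _ thK] : th ^+ k @[k --> \oo] --> 0.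
  by apply: cvg_expr; rewrite ger0_norm.
have [N HN] := ub K; exists N => // n /= Nn.
apply: le_lt_trans (HN n Nn) _.
by have := thK K (leqnn K); rewrite ger0_norm ?exprn_ge0.
Qed.

End Limits.

Theorem proposition4 (R : realType) :
  (forall p : R, 0 <= p -> p < 1 / 64 -> P_ab n p @[n --> \oo] --> (0 : R)) /\
  (forall p : R, 15 / 16 < p -> p <= 1 -> P_ab n p @[n --> \oo] --> (1 : R)).
Proof.
have [theta0 theta1] : 0 <= 995 / 1000 :> R /\ 995 / 1000 < 1 :> R by split; lra.
split=> p p0 p1; apply: (cvg_of_expr_bound theta0 theta1) => k.
  exists (7 * 2 ^ k)%N => n kn; rewrite sub0r normrN ger0_norm.
    by apply: P_ab_le => //; lra.
  by apply: P_ab_ge0 => //; lra.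
exists (7 * 2 ^ k)%N => n kn; rewrite ger0_norm.
  by apply: one_sub_P_ab_le => //; lra.
by rewrite subr_ge0 P_ab_le1 //; lra.
Qed.
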